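(* For any constants $\beta_1, \beta_2 \in [0,1)$ with $\beta_1 < \sqrt{\beta_2}$, there exist a one-dimensional online convex optimization problem (a compact convex feasible set $\mathcal{F} \subset \mathbb{R}$ and a sequence of convex loss functions $f_t$ with uniformly bounded gradients) and an initial point $x_1 \in \mathcal{F}$ such that, for every initial step size $\alpha > 0$, the iterates of \textsc{Adam} with parameters $\alpha, \beta_1, \beta_2$ satisfy $R_T/T \not\to 0$ as $T \to \infty$.
   Context: \textsc{Adam} (without debiasing) on a closed convex set $\mathcal{F} \subset \mathbb{R}^d$ with loss functions $f_1, f_2, \dots$, initial point $x_1 \in \mathcal{F}$, initial step size $\alpha > 0$ and constants $\beta_1, \beta_2 \in [0,1)$ is defined as follows. Set $m_0 = v_0 = 0 \in \mathbb{R}^d$. For $t = 1, 2, \dots$: $g_t = \nabla f_t(x_t)$; $m_t = \beta_1 m_{t-1} + (1-\beta_1) g_t$; $v_t = \beta_2 v_{t-1} + (1-\beta_2) g_t^2$ (square taken coordinatewise); $V_t = \mathrm{diag}(v_t)$; $\alpha_t = \alpha/\sqrt{t}$; $\hat{x}_{t+1} = x_t - \alpha_t V_t^{-1/2} m_t$; $x_{t+1} = \Pi_{\mathcal{F}, \sqrt{V_t}}(\hat{x}_{t+1})$, where for a positive definite matrix $M$, $\Pi_{\mathcal{F}, M}(y) = \arg\min_{x \in \mathcal{F}} \|M^{1/2}(x-y)\|$. The regret after $T$ steps is $R_T = \sum_{t=1}^T f_t(x_t) - \min_{x \in \mathcal{F}} \sum_{t=1}^T f_t(x)$. *)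

From Stdlib Require Import Reals Lra.
Open Scope R_scope.

Definition convex_fun (f : R -> R) : Prop :=
  forall x y l, 0 <= l <= 1 ->
    f (l * x + (1 - l) * y) <= l * f x + (1 - l) * f y.

(* Projection onto the interval [a,b] (one-dimensional feasible set).
   In dimension 1 the weighted projection Pi_{F,sqrt V_t} is just the
   Euclidean projection, i.e. clamping. *)
Definition clamp (a b y : R) : R := Rmax a (Rmin b y).

(* Adam (without debiasing) on F = [a,b], with gradient function
   g t x = f_t'(x) (loss f_t for t >= 1).
   adam_state ... n = (x_{n+1}, m_n, v_n); adam_state 0 = (x_1, 0, 0). *)
Fixpoint adam_state (a b : R) (g : nat -> R -> R) (x1 alpha beta1 beta2 : R)
  (n : nat) : R * R * R :=
  match n with
  | O => (x1, 0, 0)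
  | S k =>
    let '(x, m, v) := adam_state a b g x1 alpha beta1 beta2 k in
    let t := S k in
    let gt := g t x in
    let m' := beta1 * m + (1 - beta1) * gt in
    let v' := beta2 * v + (1 - beta2) * gt ^ 2 in
    let alpha_t := alpha / sqrt (INR t) in
    let xhat := x - alpha_t * m' / sqrt v' in
    (clamp a b xhat, m', v')
  end.

(* The t-th iterate x_t (meaningful for t >= 1). *)
Definition adam_iter (a b : R) (g : nat -> R -> R) (x1 alpha beta1 beta2 : R)
  (t : nat) : R :=
  fst (fst (adam_state a b g x1 alpha beta1 beta2 (pred t))).

Fixpoint sum1 (h : nat -> R) (T : nat) : R :=
  match T with
  | O => 0
  | S k => sum1 h k + h (S k)
  end.

Definition is_min_on (a b : R) (F : R -> R) (c : R) : Prop :=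
  (exists x, a <= x <= b /\ F x = c) /\ (forall x, a <= x <= b -> c <= F x).

Definition adam_regret (a b : R) (f g : nat -> R -> R)
  (x1 alpha beta1 beta2 : R) (T : nat) (r : R) : Prop :=
  exists c, is_min_on a b (fun x => sum1 (fun t => f t x) T) c /\
    r = sum1 (fun t => f t (adam_iter a b g x1 alpha beta1 beta2 t)) T - c.

From Stdlib Require Import Reals Lra Lia Wf_nat.
Open Scope R_scope.

(* The feasible set is [0,1], x_1 = 1, and the losses are linear,
   f_t(x) = c_t x, so the gradients c_t do not depend on the iterates and
   the moments m_t, v_t are explicit sequences.  The gradients are periodic
   with period P = L + 1 + N: one large gradient C = N + 1, then L zeros,
   then N gradients -1.  Each period sums to 1, so the best fixed point is
   x = 0 and its cumulative loss is about -T/P below that of x = 1.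
   Adam however stays near 1: after a peak, m_t <= C beta1^j while
   v_t >= (1 - beta2) C^2 beta2^j, so the drift away from 1 is bounded by
   alpha_t rho^j / omega with rho = beta1 / sqrt beta2 < 1; once L is large
   the -1 gradients give updates of size >= eta alpha_t towards 1, and N
   such steps bring the iterate back to 1 before the next peak.  Hence
   1 - x_t = O(alpha / sqrt t), the regret grows like T / (2P), and R_T / T
   does not tend to 0. *)

Lemma pow_antitone (b : R) (m n : nat) :
  0 <= b <= 1 -> (m <= n)%nat -> b ^ n <= b ^ m.
Proof.
  intros Hb Hmn. induction Hmn as [|n _ IH]; [lra|].
  assert (0 <= b ^ n) by (apply pow_le; lra). simpl. nra.
Qed.

Lemma pow_eventually_small (b eps : R) :
  0 <= b < 1 -> 0 < eps -> exists L, forall n, (L <= n)%nat -> b ^ n <= eps.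
Proof.
  intros Hb Heps.
  destruct (pow_lt_1_zero b ltac:(rewrite Rabs_right; lra) eps Heps) as [L HL].
  exists L. intros n Hn. specialize (HL n Hn).
  rewrite Rabs_right in HL by (apply Rle_ge, pow_le; lra). lra.
Qed.

(* The reciprocal of a square root is non-negative (recall [/ 0 = 0]). *)
Lemma inv_sqrt_nonneg (v : R) : 0 <= / sqrt v.
Proof.
  destruct (Req_dec (sqrt v) 0) as [E|E].
  - rewrite E, Rinv_0. lra.
  - pose proof (sqrt_pos v). left. apply Rinv_0_lt_compat. lra.
Qed.

Lemma div_sqrt_nonpos (m v : R) : m <= 0 -> m / sqrt v <= 0.
Proof. intros Hm. pose proof (inv_sqrt_nonneg v). unfold Rdiv. nra. Qed.

Definition step (alpha : R) (t : nat) : R := alpha / sqrt (INR t).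

Section StepSize.
Variable alpha : R.
Hypothesis alpha_nonneg : 0 <= alpha.

Lemma step_nonneg (t : nat) : 0 <= step alpha t.
Proof. pose proof (inv_sqrt_nonneg (INR t)). unfold step, Rdiv. nra. Qed.

Lemma step_antitone (s t : nat) : (1 <= s <= t)%nat -> step alpha t <= step alpha s.
Proof.
  intros H. unfold step, Rdiv. apply Rmult_le_compat_l; [lra|].
  apply Rinv_le_contravar.
  - apply sqrt_lt_R0, lt_0_INR. lia.
  - apply sqrt_le_1_alt, le_INR. lia.
Qed.

Lemma step_window (s t : nat) : (1 <= s)%nat -> (s <= t <= 4 * s)%nat ->
  step alpha s <= 2 * step alpha t.
Proof.
  intros Hs Ht.
  assert (Hs0 : 0 < sqrt (INR s)) by (apply sqrt_lt_R0, lt_0_INR; lia).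
  assert (Ht0 : 0 < sqrt (INR t)) by (apply sqrt_lt_R0, lt_0_INR; lia).
  assert (Hroot : sqrt (INR t) <= 2 * sqrt (INR s)).
  { rewrite <- (sqrt_pow2 2) by lra.
    rewrite <- sqrt_mult by (apply pow2_ge_0 || apply pos_INR).
    apply sqrt_le_1_alt. replace (2 ^ 2) with (INR 4) by (simpl; lra).
    rewrite <- mult_INR. apply le_INR. lia. }
  unfold step. apply (Rmult_le_reg_r (sqrt (INR s) * sqrt (INR t))); [nra|].
  replace (alpha / sqrt (INR s) * (sqrt (INR s) * sqrt (INR t))) with (alpha * sqrt (INR t))
    by (field; lra).
  replace (2 * (alpha / sqrt (INR t)) * (sqrt (INR s) * sqrt (INR t)))
    with (alpha * (2 * sqrt (INR s))) by (field; lra).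
  apply Rmult_le_compat_l; lra.
Qed.

Lemma step_vanishes (eps : R) : 0 < eps ->
  exists t0, forall t, (t0 <= t)%nat -> step alpha t <= eps.
Proof.
  intros Heps. destruct (INR_unbounded ((alpha / eps) ^ 2)) as [M HM].
  exists (S M). intros t Ht.
  assert (HMt : INR M < INR t) by (apply lt_INR; lia).
  assert (Ht0 : 0 < sqrt (INR t)) by (apply sqrt_lt_R0; pose proof (pos_INR M); lra).
  assert (Hroot : alpha / eps <= sqrt (INR t)).
  { rewrite <- (sqrt_pow2 (alpha / eps))
      by (unfold Rdiv; apply Rmult_le_pos; [lra|left; apply Rinv_0_lt_compat; lra]).
    apply sqrt_le_1_alt. lra. }
  unfold step. apply (Rmult_le_reg_r (sqrt (INR t) / eps)).
  - apply Rdiv_lt_0_compat; lra.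
  - replace (alpha / sqrt (INR t) * (sqrt (INR t) / eps)) with (alpha / eps) by (field; lra).
    replace (eps * (sqrt (INR t) / eps)) with (sqrt (INR t)) by (field; lra). exact Hroot.
Qed.

End StepSize.

Lemma sum1_ext (h1 h2 : nat -> R) (T : nat) :
  (forall t, h1 t = h2 t) -> sum1 h1 T = sum1 h2 T.
Proof. intros H. induction T as [|T IH]; simpl; [reflexivity|]. rewrite IH, H. reflexivity. Qed.

Lemma sum1_scale (h : nat -> R) (x : R) (T : nat) :
  sum1 (fun t => h t * x) T = sum1 h T * x.
Proof. induction T as [|T IH]; simpl; [ring|]. rewrite IH. ring. Qed.

Lemma sum1_eventually_small (y : nat -> R) (t0 : nat) (eps : R) (T : nat) :
  (forall t, 0 <= y t <= 1) -> (forall t, (t0 <= t)%nat -> y t <= eps) -> 0 <= eps ->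
  sum1 y T <= INR t0 + eps * INR T.
Proof.
  intros Hy Hsmall Heps.
  induction T as [|T IH]; cbn [sum1]; [pose proof (pos_INR t0); simpl; lra|].
  rewrite S_INR. destruct (Nat.le_gt_cases t0 (S T)) as [Hle|Hgt].
  - specialize (Hsmall _ Hle). lra.
  - assert (Hsum : sum1 y T <= INR T).
    { clear IH Hgt. induction T as [|T IH]; cbn [sum1]; [simpl; lra|].
      rewrite S_INR. specialize (Hy (S T)). lra. }
    assert (INR (S T) <= INR t0) by (apply le_INR; lia). rewrite S_INR in *.
    specialize (Hy (S T)). pose proof (pos_INR T). nra.
Qed.

Lemma linear_growth_not_sublinear (r : nat -> R) (a D : R) :
  0 < a -> (forall T, a * INR T - D <= r T) -> ~ Un_cv (fun T => r T / INR T) 0.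
Proof.
  intros Ha Hr Hcv.
  destruct (Hcv (a / 2) ltac:(lra)) as [N0 HN0].
  destruct (INR_unbounded (2 * D / a)) as [M HM].
  set (n := (N0 + M + 1)%nat).
  specialize (HN0 n ltac:(unfold n; lia)). unfold R_dist in HN0.
  rewrite Rminus_0_r in HN0. apply Rabs_def2 in HN0 as [HN0 _].
  assert (Hn : INR M <= INR n) by (apply le_INR; unfold n; lia).
  assert (Hn0 : 0 < INR n) by (apply lt_0_INR; unfold n; lia).
  assert (HD : 2 * D < a * INR n).
  { apply (Rmult_lt_reg_r (/ a)); [apply Rinv_0_lt_compat; lra|].
    replace (a * INR n * / a) with (INR n) by (field; lra). unfold Rdiv in HM. lra. }
  specialize (Hr n).
  assert (a / 2 * INR n < r n) by lra.
  apply (Rmult_lt_compat_r (INR n)) in HN0; [|lra].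
  replace (r n / INR n * INR n) with (r n) in HN0 by (field; lra). lra.
Qed.

(* Adam on the interval [0,1], started at x_1 = 1, fed with linear losses
   f_t(x) = c_t x: the gradients c_t do not depend on the iterates, so the
   moment estimates m_t, v_t are explicit sequences and only the iterate
   x_{t+1} = [pos t] depends on the step size. *)
Section LinearAdam.
Variables (beta1 beta2 alpha : R) (c : nat -> R).

Fixpoint mom (n : nat) : R :=
  match n with O => 0 | S k => beta1 * mom k + (1 - beta1) * c (S k) end.

Fixpoint var (n : nat) : R :=
  match n with O => 0 | S k => beta2 * var k + (1 - beta2) * c (S k) ^ 2 end.

Definition ratio (n : nat) : R := mom n / sqrt (var n).

Fixpoint pos (n : nat) : R :=
  match n with
  | O => 1
  | S k => clamp 0 1 (pos k - step alpha (S k) * mom (S k) / sqrt (var (S k)))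
  end.

Lemma adam_state_linear (n : nat) :
  adam_state 0 1 (fun t _ => c t) 1 alpha beta1 beta2 n = (pos n, mom n, var n).
Proof. induction n as [|n IH]; [reflexivity|]. cbn [adam_state]. rewrite IH. reflexivity. Qed.

Lemma pos_range (n : nat) : 0 <= pos n <= 1.
Proof.
  destruct n; simpl; [lra|]. unfold clamp.
  split; [apply Rmax_l|]. apply Rmax_lub; [lra|apply Rmin_l].
Qed.

Definition gap (n : nat) : R := 1 - pos n.

Lemma gap_range (n : nat) : 0 <= gap n <= 1.
Proof. pose proof (pos_range n). unfold gap. lra. Qed.

Lemma gap_step (n : nat) :
  gap (S n) <= Rmax 0 (gap n + step alpha (S n) * ratio (S n)).
Proof.
  unfold gap, ratio. cbn [pos]. unfold clamp.
  set (z := pos n - step alpha (S n) * mom (S n) / sqrt (var (S n))).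
  replace (1 - pos n + step alpha (S n) * (mom (S n) / sqrt (var (S n))))
    with (1 - z) by (unfold z, Rdiv; ring).
  unfold Rmax, Rmin. repeat destruct Rle_dec; lra.
Qed.

(* The regret of Adam against linear losses is well defined: the
   comparator minimum over [0,1] is min(0, sum_t c_t). *)
Lemma linear_regret_exists (T : nat) :
  exists r, adam_regret 0 1 (fun t x => c t * x) (fun t _ => c t) 1 alpha beta1 beta2 T r.
Proof.
  set (S := sum1 c T).
  eexists. exists (Rmin 0 S). split; [|reflexivity]. split.
  - unfold Rmin. destruct (Rle_dec 0 S).
    + exists 0. split; [lra|]. rewrite sum1_scale. fold S. ring.
    + exists 1. split; [lra|]. rewrite sum1_scale. fold S. ring.
  - intros x Hx. rewrite sum1_scale. fold S. unfold Rmin. destruct (Rle_dec 0 S); nra.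
Qed.

(* Since the comparator x = 0 has loss 0, the regret is at least the
   cumulative loss of Adam's iterates x_t = [pos (t - 1)]. *)
Lemma linear_regret_lower (T : nat) (r : R) :
  adam_regret 0 1 (fun t x => c t * x) (fun t _ => c t) 1 alpha beta1 beta2 T r ->
  sum1 (fun t => c t * pos (pred t)) T <= r.
Proof.
  intros [m [[_ Hmin] ->]]. specialize (Hmin 0 ltac:(lra)).
  rewrite sum1_scale, Rmult_0_r in Hmin.
  assert (Hiter : forall t,
    c t * adam_iter 0 1 (fun t _ => c t) 1 alpha beta1 beta2 t = c t * pos (pred t)).
  { intros t. unfold adam_iter. rewrite adam_state_linear. reflexivity. }
  rewrite (sum1_ext _ _ T Hiter). lra.
Qed.

End LinearAdam.

(* Time is cut into periods of length
   P = L + 1 + N; inside a period the phase j = t mod P determines c_t: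
   a large gradient C = N + 1 at phase 0, then L phases of gradient 0,
   then N phases of gradient -1.  Each full period has total gradient 1.
   Time 0 is never used, so the first period (times 1..P-1) has no peak. *)
Section Construction.
Variables beta1 beta2 : R.
Hypothesis hb1 : 0 <= beta1 < 1.
Hypothesis hb2 : 0 <= beta2 < 1.
Hypothesis hlt : beta1 < sqrt beta2.
Variables L N : nat.

Definition period : nat := (L + 1 + N)%nat.
Definition peak : R := INR N + 1.
Definition phase (t : nat) : nat := t mod period.

Definition grad (t : nat) : R :=
  if Nat.eqb (phase t) 0 then peak else if Nat.leb (phase t) L then 0 else -1.

Lemma period_pos : (0 < period)%nat.
Proof. unfold period. lia. Qed.

Lemma peak_ge1 : 1 <= peak.
Proof. unfold peak. pose proof (pos_INR N). lra. Qed.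

Lemma phase_lt (t : nat) : (phase t < period)%nat.
Proof. apply Nat.mod_upper_bound. pose proof period_pos. lia. Qed.

Lemma phase_small (t : nat) : (t < period)%nat -> phase t = t.
Proof. apply Nat.mod_small. Qed.

Lemma phase_periodic (t : nat) : phase (t + period) = phase t.
Proof. unfold phase. rewrite <- (Nat.mul_1_l period) at 1. apply Nat.Div0.mod_add. Qed.

Lemma phase_shift (s j : nat) : phase s = O -> (j < period)%nat -> phase (s + j) = j.
Proof.
  intros Hs Hj. unfold phase in *.
  rewrite (Nat.div_mod_eq s period), Hs, Nat.add_0_r, Nat.add_comm, Nat.mul_comm.
  rewrite Nat.Div0.mod_add. apply Nat.mod_small, Hj.
Qed.

Lemma phase_succ (t : nat) : phase (S t) = O \/ phase (S t) = S (phase t).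
Proof.
  pose proof (phase_lt t) as Hlt. pose proof period_pos.
  assert (Ht : (S t = phase t + 1 + (t / period) * period)%nat).
  { unfold phase. rewrite (Nat.div_mod_eq t period) at 1. lia. }
  assert (Hmod : phase (S t) = (S (phase t)) mod period).
  { unfold phase at 1. rewrite Ht, Nat.Div0.mod_add, Nat.add_1_r. reflexivity. }
  rewrite Hmod. destruct (Nat.eq_dec (S (phase t)) period) as [E|E].
  - left. rewrite E. apply Nat.Div0.mod_same.
  - right. apply Nat.mod_small. lia.
Qed.

Lemma grad_peak (t : nat) : phase t = O -> grad t = peak.
Proof. intros H. unfold grad. rewrite H. reflexivity. Qed.

Lemma grad_quiet (t : nat) : phase t <> O -> (phase t <= L)%nat -> grad t = 0.
Proof.
  intros H0 HL. unfold grad. apply Nat.eqb_neq in H0. apply Nat.leb_le in HL.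
  rewrite H0, HL. reflexivity.
Qed.

Lemma grad_fall (t : nat) : (L < phase t)%nat -> grad t = -1.
Proof.
  intros HL. unfold grad. destruct (Nat.eqb_spec (phase t) 0); [lia|].
  destruct (Nat.leb_spec (phase t) L); [lia|reflexivity].
Qed.

Lemma grad_off_peak (t : nat) : phase t <> O -> grad t <= 0 /\ grad t ^ 2 <= 1.
Proof.
  intros H. destruct (Nat.le_gt_cases (phase t) L) as [HL|HL].
  - rewrite grad_quiet by assumption. simpl. lra.
  - rewrite grad_fall by assumption. simpl. lra.
Qed.

Lemma grad_bounds (t : nat) : -1 <= grad t <= peak.
Proof.
  pose proof peak_ge1. destruct (Nat.eq_dec (phase t) 0) as [E|E].
  - rewrite grad_peak by assumption. lra.
  - pose proof (grad_off_peak t E). unfold grad.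
    destruct (Nat.eqb (phase t) 0), (Nat.leb (phase t) L); lra.
Qed.

Lemma grad_period_sum : sum1 grad period = 1.
Proof.
  assert (Hquiet : forall j, (j <= L)%nat -> sum1 grad j = 0).
  { induction j as [|j IH]; intros Hj; [reflexivity|]. cbn [sum1].
    rewrite IH, grad_quiet; [ring| | |lia]; rewrite phase_small; unfold period; lia. }
  assert (Hfall : forall i, (i <= N)%nat -> sum1 grad (L + i) = - INR i).
  { induction i as [|i IH]; intros Hi.
    - rewrite Nat.add_0_r, Hquiet by lia. simpl. ring.
    - rewrite Nat.add_succ_r. cbn [sum1]. rewrite IH, grad_fall, S_INR by
        (lia || (rewrite phase_small; unfold period; lia)). ring. }
  replace period with (S (L + N)) by (unfold period; lia). cbn [sum1].
  rewrite Hfall, grad_peak by (lia || (replace (S (L + N)) with period by (unfold period; lia);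
    apply Nat.Div0.mod_same)).
  unfold peak. ring.
Qed.

Lemma grad_sum_lower (T : nat) :
  INR T - INR period * (INR period + 1) <= INR period * sum1 grad T.
Proof.
  assert (Hshift : forall n, sum1 grad (n + period) = sum1 grad n + 1).
  { induction n as [|n IH]; [simpl; rewrite grad_period_sum; ring|].
    cbn [plus sum1]. rewrite IH.
    assert (Hp : grad (S (n + period)) = grad (S n)).
    { unfold grad. rewrite <- Nat.add_succ_l, phase_periodic. reflexivity. }
    rewrite Hp. ring. }
  pose proof period_pos as HP. assert (HPr : 1 <= INR period) by (apply (le_INR 1); lia).
  induction T as [T IH] using lt_wf_ind.
  destruct (Nat.lt_ge_cases T period) as [Hlt|Hge].
  - assert (Hlow : - INR T <= sum1 grad T).
    { clear IH Hlt. induction T as [|T IHT]; cbn [sum1]; [simpl; lra|].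
      rewrite S_INR. pose proof (grad_bounds (S T)). lra. }
    assert (INR T <= INR period) by (apply le_INR; lia). nra.
  - specialize (IH (T - period)%nat ltac:(lia)).
    replace T with (T - period + period)%nat at 2 by lia. rewrite Hshift.
    rewrite minus_INR in IH by lia. lra.
Qed.

(* Constants of the analysis: omega = sqrt(1 - beta2), sigma = sqrt beta2,
   rho = beta1 / sigma < 1 (this is where beta1 < sqrt beta2 is used),
   kappa = 1 / (omega (1 - rho)) bounds the total drift caused by one peak,
   eta = (1 - beta1) / 4 bounds from below the recovery speed. *)
Definition omega : R := sqrt (1 - beta2).
Definition sigma : R := sqrt beta2.
Definition rho : R := beta1 / sigma.
Definition kappa : R := / (omega * (1 - rho)).
Definition eta : R := (1 - beta1) / 4.

Lemma omega_pos : 0 < omega.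
Proof. apply sqrt_lt_R0. lra. Qed.

Lemma sigma_pos : 0 < sigma.
Proof. pose proof (sqrt_pos beta2). unfold sigma. lra. Qed.

Lemma rho_range : 0 <= rho < 1.
Proof.
  pose proof sigma_pos. unfold rho. split.
  - apply Rmult_le_pos; [lra|]. left. apply Rinv_0_lt_compat. lra.
  - apply (Rmult_lt_reg_r sigma); [lra|]. unfold Rdiv.
    rewrite Rmult_assoc, Rinv_l by lra. unfold sigma. lra.
Qed.

Lemma kappa_pos : 0 < kappa.
Proof.
  pose proof omega_pos. pose proof rho_range. apply Rinv_0_lt_compat. nra.
Qed.

Lemma kappa_spec : kappa * (1 - rho) = / omega.
Proof. pose proof omega_pos. pose proof rho_range. unfold kappa. field. lra. Qed.

Lemma eta_pos : 0 < eta.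
Proof. unfold eta. lra. Qed.

Local Notation M := (mom beta1 grad).
Local Notation V := (var beta2 grad).
Local Notation U := (ratio beta1 beta2 grad).

Lemma var_nonneg (t : nat) : 0 <= V t.
Proof.
  induction t as [|t IH]; simpl; [lra|].
  pose proof (pow2_ge_0 (grad (S t))). nra.
Qed.

(* During the first period all gradients are non-positive, hence so is m_t. *)
Lemma mom_first_period (t : nat) : (t < period)%nat -> M t <= 0.
Proof.
  induction t as [|t IH]; intros Ht; simpl; [lra|].
  assert (Hg : grad (S t) <= 0) by (apply grad_off_peak; rewrite phase_small; lia).
  specialize (IH ltac:(lia)). nra.
Qed.

Lemma mom_upper (t : nat) : M t <= peak * beta1 ^ phase t.
Proof.
  pose proof peak_ge1.
  induction t as [|t IH]; [simpl; unfold phase; rewrite Nat.Div0.mod_0_l; simpl; lra|].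
  assert (Hpow : beta1 ^ phase t <= 1) by (apply (pow_antitone beta1 0); lra || lia).
  assert (Hm : beta1 * M t <= beta1 * peak) by (apply Rmult_le_compat_l; nra).
  change (M (S t)) with (beta1 * M t + (1 - beta1) * grad (S t)).
  destruct (phase_succ t) as [E|E].
  - rewrite E, grad_peak by assumption. simpl. lra.
  - rewrite E. assert (Hg : grad (S t) <= 0) by (apply grad_off_peak; lia).
    simpl. nra.
Qed.

Lemma var_upper (t : nat) : V t <= peak ^ 2 * beta2 ^ phase t + 1.
Proof.
  assert (HC : 0 <= peak ^ 2) by apply pow2_ge_0.
  induction t as [|t IH].
  - pose proof (pow_le beta2 (phase 0) ltac:(lra)). simpl. nra.
  - assert (Hpow : beta2 ^ phase t <= 1) by (apply (pow_antitone beta2 0); lra || lia).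
    assert (Hv : beta2 * V t <= beta2 * (peak ^ 2 * beta2 ^ phase t + 1))
      by (apply Rmult_le_compat_l; lra).
    change (V (S t)) with (beta2 * V t + (1 - beta2) * grad (S t) ^ 2).
    destruct (phase_succ t) as [E|E].
    + assert (Hcap : peak ^ 2 * beta2 ^ phase t <= peak ^ 2)
        by (rewrite <- (Rmult_1_r (peak ^ 2)) at 2; apply Rmult_le_compat_l; lra).
      assert (Hv1 : beta2 * V t <= beta2 * (peak ^ 2 + 1)) by (apply Rmult_le_compat_l; lra).
      rewrite E, grad_peak by assumption. simpl pow at 3. nra.
    + rewrite E. destruct (grad_off_peak (S t)) as [_ Hg]; [lia|].
      assert ((1 - beta2) * grad (S t) ^ 2 <= 1 - beta2)
        by (apply (Rmult_le_compat_l (1 - beta2)) in Hg; lra).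
      change (beta2 ^ S (phase t)) with (beta2 * beta2 ^ phase t). lra.
Qed.

(* While m_t > 0 the last peak is still felt in the second moment:
   v_t >= (1 - beta2) C^2 beta2^j. *)
Lemma var_lower (t : nat) : 0 < M t -> (omega * peak * sigma ^ phase t) ^ 2 <= V t.
Proof.
  assert (Hsq : forall j, (omega * peak * sigma ^ j) ^ 2 = (1 - beta2) * peak ^ 2 * beta2 ^ j).
  { intros j. rewrite !Rpow_mult_distr, <- pow_mult, Nat.mul_comm, pow_mult.
    unfold omega, sigma. rewrite !pow2_sqrt by lra. ring. }
  induction t as [|t IH]; intros Hm; [simpl in Hm; lra|].
  rewrite Hsq. rewrite Hsq in IH.
  change (V (S t)) with (beta2 * V t + (1 - beta2) * grad (S t) ^ 2).
  change (M (S t)) with (beta1 * M t + (1 - beta1) * grad (S t)) in Hm.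
  pose proof (var_nonneg t). pose proof (pow2_ge_0 (grad (S t))).
  destruct (phase_succ t) as [E|E].
  - rewrite E, grad_peak by assumption. simpl. nra.
  - rewrite E. assert (Hg : grad (S t) <= 0) by (apply grad_off_peak; lia).
    assert (HmS : 0 < M t) by nra. specialize (IH HmS). simpl. nra.
Qed.

Lemma ratio_first_period (t : nat) : (t < period)%nat -> U t <= 0.
Proof. intros Ht. apply div_sqrt_nonpos, mom_first_period, Ht. Qed.

(* At phase j the update direction is at most rho^j / omega: right after a
   peak Adam moves away from 1, but by an amount that decays geometrically. *)
Lemma ratio_decay (t : nat) : U t <= rho ^ phase t / omega.
Proof.
  pose proof omega_pos. pose proof sigma_pos. pose proof rho_range. pose proof peak_ge1.
  assert (Hrhs : 0 <= rho ^ phase t / omega)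
    by (apply Rmult_le_pos; [apply pow_le; lra|left; apply Rinv_0_lt_compat; lra]).
  destruct (Rle_dec (M t) 0) as [Hm|Hm].
  { pose proof (div_sqrt_nonpos _ (V t) Hm). unfold ratio. lra. }
  apply Rnot_le_lt in Hm.
  set (A := omega * peak * sigma ^ phase t).
  assert (HA : 0 < A) by (unfold A; repeat apply Rmult_lt_0_compat; try apply pow_lt; lra).
  assert (Hroot : A <= sqrt (V t)).
  { rewrite <- (sqrt_pow2 A) by lra. apply sqrt_le_1_alt, var_lower, Hm. }
  unfold ratio. apply Rle_trans with (peak * beta1 ^ phase t / A).
  - unfold Rdiv. apply Rmult_le_compat; [lra|left; apply Rinv_0_lt_compat; lra| |].
    + apply mom_upper.
    + apply Rinv_le_contravar; lra.
  - right. unfold A, rho, Rdiv. rewrite Rpow_mult_distr, pow_inv. field.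
    repeat split; try lra. apply pow_nonzero. lra.
Qed.

(* The delay L is long enough for the peak to be forgotten by both moments. *)
Hypothesis delay_mom : peak * beta1 ^ (L + 1) <= (1 - beta1) / 2.
Hypothesis delay_var : peak ^ 2 * beta2 ^ (L + 1) <= 1.

Lemma ratio_fall (t : nat) : (L < phase t)%nat -> U t <= - eta.
Proof.
  intros HL. destruct t as [|t]; [unfold phase in HL; rewrite Nat.Div0.mod_0_l in HL; lia|].
  assert (E : phase (S t) = S (phase t)) by (destruct (phase_succ t) as [E|E]; [lia|exact E]).
  rewrite E in HL. pose proof peak_ge1.
  assert (Hmom : M (S t) <= - ((1 - beta1) / 2)).
  { change (M (S t)) with (beta1 * M t + (1 - beta1) * grad (S t)).
    rewrite grad_fall by (rewrite E; exact HL).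
    assert (Hm : beta1 * M t <= beta1 * (peak * beta1 ^ phase t))
      by (apply Rmult_le_compat_l; [lra|apply mom_upper]).
    assert (Hpow : beta1 ^ S (phase t) <= beta1 ^ (L + 1)) by (apply pow_antitone; lra || lia).
    assert (peak * beta1 ^ S (phase t) <= peak * beta1 ^ (L + 1))
      by (apply Rmult_le_compat_l; lra).
    change (beta1 ^ S (phase t)) with (beta1 * beta1 ^ phase t) in *. lra. }
  assert (Hvlow : 1 - beta2 <= V (S t)).
  { change (V (S t)) with (beta2 * V t + (1 - beta2) * grad (S t) ^ 2).
    rewrite grad_fall by (rewrite E; exact HL). pose proof (var_nonneg t). nra. }
  assert (Hvup : V (S t) <= 4).
  { pose proof (var_upper (S t)) as Hv. rewrite E in Hv.
    assert (beta2 ^ S (phase t) <= beta2 ^ (L + 1)) by (apply pow_antitone; lra || lia).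
    assert (peak ^ 2 * beta2 ^ S (phase t) <= peak ^ 2 * beta2 ^ (L + 1))
      by (apply Rmult_le_compat_l; [apply pow2_ge_0|lra]).
    lra. }
  assert (Hroot : 0 < sqrt (V (S t)) <= 2).
  { split; [apply sqrt_lt_R0; lra|].
    rewrite <- (sqrt_pow2 2) by lra. apply sqrt_le_1_alt. lra. }
  assert (Hinv : / 2 <= / sqrt (V (S t))) by (apply Rinv_le_contravar; lra).
  unfold ratio, eta, Rdiv. nra.
Qed.

Section Iterates.
Variable alpha : R.
Hypothesis alpha_nonneg : 0 <= alpha.
(* The N recovery steps of a period undo the drift caused by its peak. *)
Hypothesis width : 2 * kappa <= INR N * eta.

Local Notation Y := (gap beta1 beta2 alpha grad).

Lemma gap_first_period (t : nat) : (t < period)%nat -> Y t = 0.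
Proof.
  induction t as [|t IH]; intros Ht; [unfold gap; simpl; ring|].
  pose proof (gap_step beta1 beta2 alpha grad t) as Hstep.
  pose proof (gap_range beta1 beta2 alpha grad (S t)).
  rewrite IH in Hstep by lia.
  pose proof (ratio_first_period (S t) Ht). pose proof (step_nonneg alpha alpha_nonneg (S t)).
  rewrite Rmax_left in Hstep by nra. lra.
Qed.

Section Period.
Variable s : nat.
Hypothesis period_start : phase s = O.
Hypothesis after_first : (period <= s)%nat.
Hypothesis start_gap : Y (pred s) = 0.

Lemma step_in_period (t : nat) : (s <= t)%nat -> step alpha t <= step alpha s.
Proof. intros Ht. apply step_antitone; [exact alpha_nonneg|]; pose proof period_pos; lia. Qed.

Lemma gap_rise (j : nat) : (j <= L)%nat ->
  Y (s + j) <= kappa * step alpha s * (1 - rho ^ S j).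
Proof.
  pose proof omega_pos. pose proof rho_range. pose proof kappa_pos.
  pose proof kappa_spec as Hkappa. pose proof period_pos.
  pose proof (step_nonneg alpha alpha_nonneg s).
  induction j as [|j IH]; intros Hj.
  - rewrite Nat.add_0_r. replace s with (S (pred s)) at 1 by lia.
    eapply Rle_trans; [apply gap_step|]. rewrite start_gap, Rplus_0_l.
    replace (S (pred s)) with s by lia.
    pose proof (ratio_decay s) as Hu. rewrite period_start in Hu. simpl pow in Hu.
    replace (kappa * step alpha s * (1 - rho ^ 1)) with (step alpha s * / omega)
      by (rewrite <- Hkappa; simpl; ring).
    apply Rmax_lub; [apply Rmult_le_pos; [lra|left; apply Rinv_0_lt_compat; lra]|].
    apply Rmult_le_compat_l; lra.
  - specialize (IH ltac:(lia)). rewrite Nat.add_succ_r.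
    pose proof (ratio_decay (S (s + j))) as Hu.
    rewrite <- Nat.add_succ_r, phase_shift in Hu by (assumption || unfold period; lia).
    rewrite Nat.add_succ_r in Hu.
    pose proof (step_in_period (S (s + j)) ltac:(lia)).
    pose proof (step_nonneg alpha alpha_nonneg (S (s + j))).
    assert (Hr : 0 <= rho ^ S j / omega)
      by (apply Rmult_le_pos; [apply pow_le; lra|left; apply Rinv_0_lt_compat; lra]).
    assert (Hmove : step alpha (S (s + j)) * U (S (s + j)) <= step alpha s * (rho ^ S j / omega)).
    { eapply Rle_trans; [apply Rmult_le_compat_l; [lra|exact Hu]|].
      apply Rmult_le_compat_r; lra. }
    assert (Hnext : kappa * step alpha s * (1 - rho ^ S j) + step alpha s * (rho ^ S j / omega)
                    = kappa * step alpha s * (1 - rho ^ S (S j))).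
    { unfold Rdiv. rewrite <- Hkappa. simpl. ring. }
    assert (Hpow : rho ^ S (S j) <= 1) by (apply (pow_antitone rho 0); lra || lia).
    eapply Rle_trans; [apply gap_step|]. apply Rmax_lub; [|lra].
    apply Rmult_le_pos; [nra|lra].
Qed.

Lemma gap_fall (i : nat) : (i <= N)%nat ->
  Y (s + L + i) <= Rmax 0 (kappa * step alpha s - INR i * eta * step alpha (s + period - 1)).
Proof.
  pose proof rho_range. pose proof kappa_pos. pose proof eta_pos.
  pose proof (step_nonneg alpha alpha_nonneg s).
  pose proof (step_nonneg alpha alpha_nonneg (s + period - 1)) as Hend.
  induction i as [|i IH]; intros Hi.
  - rewrite Nat.add_0_r, Rmult_0_l, Rmult_0_l, Rminus_0_r.
    eapply Rle_trans; [apply gap_rise; lia|]. eapply Rle_trans; [|apply Rmax_r].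
    assert (0 <= rho ^ S L) by (apply pow_le; lra).
    assert (0 <= kappa * step alpha s) by (apply Rmult_le_pos; lra). nra.
  - specialize (IH ltac:(lia)). rewrite Nat.add_succ_r.
    set (t := S (s + L + i)).
    assert (Hphase : (L < phase t)%nat).
    { unfold t. replace (S (s + L + i)) with (s + (L + S i))%nat by lia.
      rewrite phase_shift by (assumption || unfold period; lia). lia. }
    pose proof (ratio_fall t Hphase) as Hu.
    assert (Hst : step alpha (s + period - 1) <= step alpha t)
      by (apply step_antitone; [exact alpha_nonneg|]; unfold t, period in *; lia).
    assert (Hmove : step alpha t * U t <= - (eta * step alpha (s + period - 1))).
    { pose proof (step_nonneg alpha alpha_nonneg t).
      apply Rle_trans with (step alpha t * - eta); [apply Rmult_le_compat_l; lra|nra]. }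
    eapply Rle_trans; [apply gap_step|]. fold t. rewrite S_INR.
    assert (0 <= eta * step alpha (s + period - 1)) by nra.
    revert IH Hmove. unfold Rmax. repeat destruct Rle_dec; lra.
Qed.

Lemma gap_period_bound (j : nat) : (j < period)%nat -> Y (s + j) <= kappa * step alpha s.
Proof.
  pose proof rho_range. pose proof kappa_pos. pose proof eta_pos.
  pose proof (step_nonneg alpha alpha_nonneg s).
  pose proof (step_nonneg alpha alpha_nonneg (s + period - 1)).
  intros Hj. destruct (Nat.le_gt_cases j L) as [HjL|HjL].
  - eapply Rle_trans; [apply gap_rise, HjL|].
    assert (0 <= rho ^ S j) by (apply pow_le; lra).
    assert (0 <= kappa * step alpha s) by (apply Rmult_le_pos; lra). nra.
  - replace (s + j)%nat with (s + L + (j - L))%nat by lia.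
    eapply Rle_trans; [apply gap_fall; unfold period in Hj; lia|].
    assert (0 <= kappa * step alpha s) by (apply Rmult_le_pos; lra).
    apply Rmax_lub; [lra|]. pose proof (pos_INR (j - L)).
    assert (0 <= INR (j - L) * eta * step alpha (s + period - 1))
      by (apply Rmult_le_pos; [apply Rmult_le_pos|]; lra).
    lra.
Qed.

(* At the end of the period the iterate is back at 1, since
   kappa alpha_s <= 2 kappa alpha_{s+P-1} <= N eta alpha_{s+P-1}. *)
Lemma gap_period_end : Y (s + period - 1) = 0.
Proof.
  pose proof kappa_pos. pose proof eta_pos. pose proof period_pos.
  pose proof (gap_range beta1 beta2 alpha grad (s + period - 1)).
  pose proof (gap_fall N (le_n N)) as Hfall.
  replace (s + L + N)%nat with (s + period - 1)%nat in Hfall by (unfold period; lia).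
  assert (Hwin : step alpha s <= 2 * step alpha (s + period - 1))
    by (apply step_window; [exact alpha_nonneg|lia|lia]).
  pose proof (step_nonneg alpha alpha_nonneg (s + period - 1)).
  assert (kappa * step alpha s <= INR N * eta * step alpha (s + period - 1)) by nra.
  rewrite Rmax_left in Hfall by lra. lra.
Qed.

End Period.

Lemma gap_before_peak (p : nat) : (1 <= p)%nat -> Y (pred (p * period)) = 0.
Proof.
  pose proof period_pos.
  induction p as [|p IH]; intros Hp; [lia|].
  destruct (Nat.eq_dec p 0) as [->|Hp0].
  - apply gap_first_period. lia.
  - replace (pred (S p * period)) with (p * period + period - 1)%nat by (simpl; lia).
    apply gap_period_end.
    + apply Nat.Div0.mod_mul.
    + nia.
    + apply IH. lia.
Qed.

Lemma gap_decay (t : nat) : (1 <= t)%nat -> Y t <= 2 * kappa * step alpha t.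
Proof.
  intros Ht. pose proof period_pos. pose proof kappa_pos.
  pose proof (step_nonneg alpha alpha_nonneg t).
  destruct (Nat.lt_ge_cases t period) as [Hlt|Hge].
  - rewrite gap_first_period by exact Hlt. nra.
  - set (p := (t / period)%nat). set (s := (p * period)%nat).
    assert (Hp : (1 <= p)%nat) by (apply Nat.div_le_lower_bound; lia).
    assert (Hts : t = (s + phase t)%nat)
      by (unfold s, p, phase; rewrite Nat.mul_comm; apply Nat.div_mod_eq).
    pose proof (phase_lt t).
    assert (Hbound : Y (s + phase t) <= kappa * step alpha s).
    { apply gap_period_bound; [apply Nat.Div0.mod_mul|unfold s; nia| |assumption].
      apply gap_before_peak, Hp. }
    rewrite <- Hts in Hbound.
    assert (Hwin : step alpha s <= 2 * step alpha t)
      by (apply step_window; [exact alpha_nonneg|unfold s; nia|unfold s in *; nia]).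
    nra.
Qed.

Lemma gap_vanishes (eps : R) : 0 < eps -> exists t0, forall t, (t0 <= t)%nat -> Y t <= eps.
Proof.
  intros Heps. pose proof kappa_pos.
  destruct (step_vanishes alpha alpha_nonneg (eps / (2 * kappa))) as [t0 Ht0];
    [apply Rdiv_lt_0_compat; lra|].
  exists (S t0). intros t Ht.
  eapply Rle_trans; [apply gap_decay; lia|].
  specialize (Ht0 t ltac:(lia)).
  apply (Rmult_le_compat_l (2 * kappa)) in Ht0; [|lra].
  replace (2 * kappa * (eps / (2 * kappa))) with eps in Ht0 by (field; lra). lra.
Qed.

Lemma loss_vs_gap (T : nat) :
  sum1 grad T - peak * sum1 (fun t => Y (pred t)) T
  <= sum1 (fun t => grad t * pos beta1 beta2 alpha grad (pred t)) T.
Proof.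
  induction T as [|T IH]; cbn [sum1]; [lra|].
  pose proof (grad_bounds (S T)). pose proof (gap_range beta1 beta2 alpha grad T).
  unfold gap in *. simpl pred. nra.
Qed.

Lemma regret_linear_growth (r : nat -> R) :
  (forall T, adam_regret 0 1 (fun t x => grad t * x) (fun t _ => grad t) 1
               alpha beta1 beta2 T (r T)) ->
  exists D, forall T, / (2 * INR period) * INR T - D <= r T.
Proof.
  intros Hr. pose proof peak_ge1.
  assert (HP : 1 <= INR period) by (apply (le_INR 1), period_pos).
  set (eps := / (2 * INR period * peak)).
  assert (Heps : 0 < eps) by (apply Rinv_0_lt_compat; nra).
  destruct (gap_vanishes eps Heps) as [t0 Ht0].
  exists (INR period + 1 + peak * INR (S t0)). intros T.
  pose proof (linear_regret_lower beta1 beta2 alpha grad T (r T) (Hr T)) as Hlow.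
  pose proof (loss_vs_gap T) as Hloss.
  assert (Hgap : sum1 (fun t => Y (pred t)) T <= INR (S t0) + eps * INR T).
  { apply sum1_eventually_small; [intros; apply gap_range| |lra].
    intros t Ht. apply Ht0. lia. }
  assert (Hgrad : INR T / INR period - (INR period + 1) <= sum1 grad T).
  { pose proof (grad_sum_lower T).
    apply (Rmult_le_reg_l (INR period)); [lra|].
    replace (INR period * (INR T / INR period - (INR period + 1)))
      with (INR T - INR period * (INR period + 1)) by (field; lra). lra. }
  assert (Hrate : peak * (eps * INR T) = / (2 * INR period) * INR T) by (unfold eps; field; lra).
  assert (INR T / INR period = 2 * (/ (2 * INR period) * INR T)) by (field; lra).
  apply (Rmult_le_compat_l peak) in Hgap; [|lra]. lra.
Qed.

End Iterates.
End Construction.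

Lemma exists_width (beta1 beta2 : R) :
  0 <= beta1 < 1 -> 0 <= beta2 < 1 -> beta1 < sqrt beta2 ->
  exists N, 2 * kappa beta1 beta2 <= INR N * eta beta1.
Proof.
  intros hb1 hb2 hlt.
  pose proof (kappa_pos beta1 beta2 hb1 hb2 hlt). pose proof (eta_pos beta1 hb1).
  destruct (INR_unbounded (2 * kappa beta1 beta2 / eta beta1)) as [N HN].
  exists N. apply Rgt_lt, (Rmult_lt_compat_r (eta beta1)) in HN; [|lra].
  unfold Rdiv in HN. rewrite Rmult_assoc, Rinv_l in HN; lra.
Qed.

Lemma exists_delay (beta1 beta2 : R) (N : nat) :
  0 <= beta1 < 1 -> 0 <= beta2 < 1 ->
  exists L, peak N * beta1 ^ (L + 1) <= (1 - beta1) / 2 /\ peak N ^ 2 * beta2 ^ (L + 1) <= 1.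
Proof.
  intros hb1 hb2. pose proof (peak_ge1 N) as HC.
  destruct (pow_eventually_small beta1 ((1 - beta1) / (2 * peak N)) hb1) as [L1 HL1];
    [apply Rdiv_lt_0_compat; lra|].
  destruct (pow_eventually_small beta2 (/ peak N ^ 2) hb2) as [L2 HL2];
    [apply Rinv_0_lt_compat; nra|].
  exists (L1 + L2)%nat. split.
  - specialize (HL1 (L1 + L2 + 1)%nat ltac:(lia)).
    apply (Rmult_le_compat_l (peak N)) in HL1; [|lra].
    replace (peak N * ((1 - beta1) / (2 * peak N))) with ((1 - beta1) / 2) in HL1
      by (field; lra). exact HL1.
  - specialize (HL2 (L1 + L2 + 1)%nat ltac:(lia)).
    apply (Rmult_le_compat_l (peak N ^ 2)) in HL2; [|nra].
    rewrite Rinv_r in HL2 by nra. exact HL2.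
Qed.

Theorem theorem2 (beta1 beta2 : R)
  (hb1 : 0 <= beta1 < 1) (hb2 : 0 <= beta2 < 1) (hlt : beta1 < sqrt beta2) :
  exists (a b : R) (f g : nat -> R -> R) (x1 : R),
    a <= b /\
    (forall t, convex_fun (f t)) /\
    (forall t x, derivable_pt_lim (f t) x (g t x)) /\
    (exists G, forall t x, a <= x <= b -> Rabs (g t x) <= G) /\
    a <= x1 <= b /\
    forall alpha, 0 < alpha ->
      (forall T, exists r, adam_regret a b f g x1 alpha beta1 beta2 T r) /\
      (forall r : nat -> R,
         (forall T, adam_regret a b f g x1 alpha beta1 beta2 T (r T)) ->
         ~ Un_cv (fun T => r T / INR T) 0).
Proof.
  destruct (exists_width beta1 beta2 hb1 hb2 hlt) as [N Hwidth].
  destruct (exists_delay beta1 beta2 N hb1 hb2) as [L [Hmom Hvar]].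
  exists 0, 1, (fun t x => grad L N t * x), (fun t _ => grad L N t), 1.
  split; [lra|]. split; [|split; [|split; [|split]]].
  - intros t x y l _. right. ring.
  - intros t x.
    pose proof (derivable_pt_lim_scal id (grad L N t) x 1 (derivable_pt_lim_id x)) as H.
    rewrite Rmult_1_r in H. exact H.
  - exists (peak N). intros t x _. apply Rabs_le.
    pose proof (grad_bounds L N t). pose proof (peak_ge1 N). lra.
  - lra.
  - intros alpha Halpha. split; [apply linear_regret_exists|].
    intros r Hr.
    destruct (regret_linear_growth beta1 beta2 hb1 hb2 hlt L N Hmom Hvar alpha
                (Rlt_le _ _ Halpha) Hwidth r Hr) as [D HD].
    apply (linear_growth_not_sublinear r (/ (2 * INR (period L N))) D); [|exact HD].
    apply Rinv_0_lt_compat. pose proof (lt_0_INR _ (period_pos L N)). lra.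
Qed.
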